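(* Let $\mathcal D\subset\mathbb{C}$ be a fixed compact set whose distance to $[L_-^{\vartheta_N},L_+^{\vartheta_N}]$ is bounded below by a positive constant independent of $N$. Then there is a constant $C>0$ such that for all sufficiently large $N$, \[ \sup_{z\in\mathcal D}\big|m_{fc}^{\vartheta_N}(z)-m_{fc}^{\vartheta_\infty}(z)\big|\le C|\vartheta_N-\vartheta_\infty|. \]
   Context: $\nu$ is a deterministic centered compactly supported probability measure on $\mathbb{R}$; $I_\nu$ is the smallest interval containing $\operatorname{supp}\nu$, and $\inf_{x\in I_\nu}\int(v-x)^{-2}d\nu(v)\ge1+\varpi$ for some $\varpi>0$. For $\vartheta\in[0,1+\varpi]$, $m_{fc}^\vartheta$ is the unique analytic function on $\mathbb{C}^+$ with positive imaginary part solving $m_{fc}^\vartheta(z)=\int\frac{d\nu(x)}{\vartheta x-z-m_{fc}^\vartheta(z)}$; it is the Stieltjes transform $\int\frac{d\rho_{fc}^\vartheta(x)}{x-z}$ of a probability measure $\rho_{fc}^\vartheta$ supported on $[L_-^\vartheta,L_+^\vartheta]$, and this integral defines $m_{fc}^\vartheta$ on $\mathbb{C}\setminus[L_-^\vartheta,L_+^\vartheta]$. $\vartheta_N\in[0,1+\varpi]$ is a sequence with $\vartheta_N\to\vartheta_\infty$. *)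

From HB Require Import structures.
From mathcomp Require Import all_boot all_order all_algebra.
From mathcomp Require Import all_classical all_reals all_analysis.
From mathcomp Require Import complex.
Set Implicit Arguments. Unset Strict Implicit. Unset Printing Implicit Defensive.
Import Order.TTheory GRing.Theory Num.Theory.
Import numFieldNormedType.Exports.
Local Open Scope classical_set_scope.
Local Open Scope ring_scope.
Local Open Scope complex_scope.

Definition cmod (R : realType) (z : R[i]) : R :=
  Num.sqrt (complex.Re z ^+ 2 + complex.Im z ^+ 2).

Definition cintegral (R : realType) (mu : {measure set R -> \bar R})
  (f : R -> R[i]) : R[i] :=
  (Rintegral mu setT (fun x => complex.Re (f x)))
  +i* (Rintegral mu setT (fun x => complex.Im (f x))).

Definition msupport (R : realType) (mu : {measure set R -> \bar R}) : set R :=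
  [set x | forall e : R, 0 < e -> (0 < mu (ball x e))%E].

Definition hull_interval (R : realType) (S : set R) : set R :=
  [set x | exists s1 s2, S s1 /\ S s2 /\ s1 <= x /\ x <= s2].

Definition inv_sq_ext (R : realType) (x v : R) : \bar R :=
  if v == x then +oo%E else ((v - x) ^- 2)%:E.

(* For Im z > 0, m = mfc th z and m' = mfc th' z both solve the self-consistent
   equation m = int (th x - z - m)^-1 dnu.  Subtracting the two equations gives
     m - m' = int (th' - th) x W dnu + (m - m') int W dnu,
     W = (th x - z - m)^-1 (th' x - z - m')^-1,
   while the imaginary part of each equation says that the weight
   a = int |th x - z - m|^-2 dnu equals Im m / (Im z + Im m).  As m is also the
   Stieltjes transform of a measure supported at distance >= delta from z,
   Im m <= Im z / delta^2, so a <= K / (1 + K) with K = delta^-2, and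
   |int W| <= (a + a') / 2 stays uniformly below 1.  With supp nu in [-M, M] this
   yields |m - m'| <= 2 M (1 + K) |th - th'|.
   The lower half-plane follows by conjugation, and a real z is the limit of
   z + i eps once it is known to avoid [Lm th_inf, Lp th_inf]: otherwise an
   endpoint of that interval, which carries positive rho th_inf-mass, would lie
   at distance >= delta / 2 from every [Lm th_N, Lp th_N], where the upper
   half-plane estimate makes the rho th_inf-mass of small balls vanish. *)

From HB Require Import structures.
From mathcomp Require Import all_boot all_order all_algebra.
From mathcomp Require Import all_classical all_reals all_analysis.
From mathcomp Require Import complex measurable_realfun.
From mathcomp Require Import ring lra.
Import Order.TTheory GRing.Theory Num.Theory.
Import numFieldNormedType.Exports.
Local Open Scope classical_set_scope.
Local Open Scope ring_scope.
Local Open Scope complex_scope.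
Set Implicit Arguments. Unset Strict Implicit. Unset Printing Implicit Defensive.
Local Notation Re := complex.Re.
Local Notation Im := complex.Im.

Section ComplexModulus.
Variable R : realType.
Implicit Types z w : R[i].

Lemma complex_eta z : z = Re z +i* Im z. Proof. by case: z. Qed.

Lemma ReMc z w : Re (z * w) = Re z * Re w - Im z * Im w.
Proof. by case: z => a b; case: w. Qed.

Lemma ImMc z w : Im (z * w) = Re z * Im w + Im z * Re w.
Proof. by case: z => a b; case: w. Qed.

Lemma ReJc z : Re z^* = Re z. Proof. by case: z. Qed.

Lemma ImJc z : Im z^* = - Im z. Proof. by case: z. Qed.

Lemma cmodE z : cmod z = Normc.normc z. Proof. by case: z. Qed.

Lemma normc_cmod z : `|z| = (cmod z)%:C.
Proof. by case: z => a b; rewrite normc_def. Qed.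

Lemma cmod_ge0 z : 0 <= cmod z. Proof. exact: sqrtr_ge0. Qed.

Lemma ler_cmodD z w : cmod (z + w) <= cmod z + cmod w.
Proof. by have := ler_normD z w; rewrite !normc_cmod -rmorphD lecR. Qed.

Lemma cmodM z w : cmod (z * w) = cmod z * cmod w.
Proof. by rewrite !cmodE Normc.normcM. Qed.

Lemma cmodV z : cmod z^-1 = (cmod z)^-1.
Proof. by rewrite !cmodE Normc.normcV. Qed.

Lemma cmodJ z : cmod z^* = cmod z.
Proof. by case: z => a b; rewrite /cmod /= sqrrN. Qed.

Lemma cmod_distC z w : cmod (z - w) = cmod (w - z).
Proof. by have := distrC z w; rewrite !normc_cmod => -[]. Qed.

Lemma cmod_real (x : R) : cmod x%:C = `|x|.
Proof. by rewrite /cmod /= expr0n addr0 sqrtr_sqr. Qed.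

Lemma sqr_cmod z : cmod z ^+ 2 = Re z ^+ 2 + Im z ^+ 2.
Proof. by rewrite sqr_sqrtr // addr_ge0 // sqr_ge0. Qed.

Lemma cmod_eq0 z : (cmod z == 0) = (z == 0).
Proof.
apply/eqP/eqP => [|->]; last by rewrite cmod_real normr0.
by rewrite cmodE; exact: Normc.eq0_normc.
Qed.

Lemma cmod_gt0 z : (0 < cmod z) = (z != 0).
Proof. by rewrite lt_def cmod_ge0 andbT cmod_eq0. Qed.

Lemma normRe_le_cmod z : `|Re z| <= cmod z.
Proof.
by rewrite -sqrtr_sqr ler_sqrt ?lerDl ?sqr_ge0 // addr_ge0 // sqr_ge0.
Qed.

Lemma normIm_le_cmod z : `|Im z| <= cmod z.
Proof.
by rewrite -sqrtr_sqr ler_sqrt ?lerDr ?sqr_ge0 // addr_ge0 // sqr_ge0.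
Qed.

Lemma ReVc z : Re z^-1 = Re z / cmod z ^+ 2.
Proof. by case: z => a b; rewrite sqr_cmod. Qed.

Lemma ImVc z : Im z^-1 = - Im z / cmod z ^+ 2.
Proof. by case: z => a b; rewrite sqr_cmod /= mulNr. Qed.

Lemma dist_Re_le_cmod (x : R) w : `|x - Re w| <= cmod (x%:C - w).
Proof. by apply: le_trans (normRe_le_cmod _); rewrite raddfB. Qed.

Lemma cmod_subC_real (x : R) z : Im z = 0 -> cmod (x%:C - z) = `|x - Re z|.
Proof. by move=> z0; rewrite [z]complex_eta z0 -rmorphB cmod_real. Qed.

End ComplexModulus.

(** * Measures vanish off their support *)

Section NullOffSupport.
Variable R : realType.
Variable mu : {measure set R -> \bar R}.

Definition grid_ball (t : nat * int) : set R :=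
  ball (t.2%:~R / t.1.+1%:R : R) t.1.+1%:R^-1.

(* The null ones among the countably many grid balls, enumerated through
   [unpickle]; every point off the support of mu lies in one of them. *)
Definition null_grid_ball (n : nat) : set R :=
  if unpickle n is Some t then
    if mu (grid_ball t) == 0%E then grid_ball t else set0
  else set0.

Lemma measurable_null_grid_ball n : measurable (null_grid_ball n).
Proof.
rewrite /null_grid_ball; case: unpickle => [t|] //.
by case: ifP => // _; exact: measurable_ball.
Qed.

Lemma null_grid_ball_eq0 n : mu (null_grid_ball n) = 0%E.
Proof.
rewrite /null_grid_ball; case: unpickle => [t|]; last exact: measure0.
by case: ifP => [/eqP //|_]; exact: measure0.
Qed.

Lemma not_msupport_null_grid_ball x :
  ~ msupport mu x -> exists n, null_grid_ball n x.
Proof.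
move=> /existsNP[e /not_implyP[e0 /negP]]; rewrite -leNgt => mue.
have mue0 : mu (ball x e) = 0%E by apply/le_anti; rewrite mue measure_ge0.
set k := Num.truncn (2 / e); set h : R := k.+1%:R^-1.
have h0 : 0 < h by rewrite invr_gt0 ltr0n.
have he : 2 * h < e.
  have := truncnS_gt (2 / e); rewrite -/k ltr_pdivrMr // => ?.
  by rewrite /h ltr_pdivrMr ?ltr0n // mulrC.
set f := Num.floor (x / h); set c : R := f%:~R * h.
have xc : `|c - x| < h.
  have /andP[fl fu] := floor_itv (x / h).
  rewrite ler_pdivlMr // in fl; rewrite ltr_pdivrMr // intrD mulrDl mul1r in fu.
  by rewrite distrC ger0_norm ?subr_ge0 // ltrBlDl.
have cx : ball c h `<=` ball x e.
  move=> y; rewrite -!ball_normE /= => cy.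
  apply: le_lt_trans (ler_distD c x y) _.
  by rewrite distrC; apply: lt_trans he; rewrite mulr2n mulrDl mul1r ltrD.
have muc : mu (ball c h) = 0%E.
  apply/le_anti; rewrite measure_ge0 andbT -mue0.
  by apply: le_measure => //; rewrite inE; exact: measurable_ball.
exists (pickle (k, f)); rewrite /null_grid_ball pickleK /grid_ball /= -/h.
by rewrite -/c muc eqxx -ball_normE.
Qed.

Lemma measure_off_msupport (A : set R) :
  measurable A -> A `&` msupport mu = set0 -> mu A = 0%E.
Proof.
move=> mA AS; apply/le_anti; rewrite measure_ge0 andbT.
apply: le_trans (measure_sigma_subadditive _ measurable_null_grid_ball mA _) _.
- move=> x Ax; have [|n nx] := @not_msupport_null_grid_ball x; last by exists n.
  by move=> Sx; have : (A `&` msupport mu) x by []; rewrite AS.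
- by rewrite eseries0 // => n _ _; exact: null_grid_ball_eq0.
Qed.

Lemma measure_off_itv (a b : R) :
  msupport mu `<=` `[a, b] -> mu (~` `[a, b]) = 0%E.
Proof.
move=> Sab; apply: measure_off_msupport; first exact: measurableC.
by apply/seteqP; split => // x [/[swap] /Sab].
Qed.

Lemma measure_off_compact_msupport : compact (msupport mu) ->
  exists2 M, 0 <= M & mu (~` `[- M, M]) = 0%E.
Proof.
move=> /compact_bounded[M0 [_ M0S]]; exists (`|M0| + 1) => //.
apply: measure_off_itv => x Sx; rewrite /= in_itv /= -ler_norml.
by apply: M0S (Sx); rewrite ltr_pwDr // ler_norm.
Qed.

End NullOffSupport.

(** * Integrals of bounded measurable functions *)

Lemma measurable_inv (R : realType) : measurable_fun [set: R] (@GRing.inv R).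
Proof.
have -> : [set: R] = ~` [set 0] `|` [set 0] by rewrite setUC setUv.
apply/measurable_funU => //; first exact: measurableC.
split.
  apply: open_continuous_measurable_fun.
    by apply: closed_openC; exact: closed_eq.
  by move=> x; rewrite inE /= => /eqP x0; exact: inv_continuous.
move=> _ Y mY; rewrite (_ : [set 0] `&` _ = if 0^-1 \in Y then [set 0] else set0).
  by case: ifP.
apply/seteqP; split=> [x [/= -> Yx]|x]; first by rewrite mem_set.
by case: ifP => // /set_mem Y0 /= ->.
Qed.

Lemma bounded_of_normr_le (R : realType) (T : Type) (f : T -> R) (S : set T) K :
  (forall x, S x -> `|f x| <= K) -> [bounded f x | x in S].
Proof.
move=> fK; rewrite /bounded_near; near=> M => x /= Sx.
apply: le_trans (fK _ Sx) _; near: M; apply: nbhs_pinfty_ge; exact: num_real.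
Unshelve. all: by end_near.
Qed.

Definition mbounded (R : realType) (S : set R) (f : R -> R) :=
  measurable_fun setT f /\ exists K, forall x, S x -> `|f x| <= K.

Definition cmbounded (R : realType) (S : set R) (f : R -> R[i]) :=
  mbounded S (fun x => Re (f x)) /\ mbounded S (fun x => Im (f x)).

Section BoundedMeasurable.
Variables (R : realType) (S : set R).
Implicit Types f g : R -> R.

Lemma mbounded_cst c : mbounded S (fun=> c).
Proof. by split; [exact: measurable_cst | exists `|c|]. Qed.

Lemma mboundedD f g : mbounded S f -> mbounded S g -> mbounded S (f \+ g).
Proof.
move=> [mf [K fK]] [mg [L gL]]; split; first exact: measurable_funD.
by exists (K + L) => x Sx; apply: le_trans (ler_normD _ _) (lerD (fK _ Sx) (gL _ Sx)).
Qed.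

Lemma mboundedN f : mbounded S f -> mbounded S (\- f).
Proof.
move=> [mf [K fK]]; split; first exact: measurable_funN.
by exists K => x Sx; rewrite normrN fK.
Qed.

Lemma mboundedM f g : mbounded S f -> mbounded S g -> mbounded S (f \* g).
Proof.
move=> [mf [K fK]] [mg [L gL]]; split; first exact: measurable_funM.
exists (K * L) => x Sx; rewrite normrM.
by apply: ler_pM => //; [exact: fK | exact: gL].
Qed.

Lemma mboundedV f c : 0 < c -> measurable_fun setT f ->
  (forall x, S x -> c <= `|f x|) -> mbounded S (fun x => (f x)^-1).
Proof.
move=> c0 mf cf; split; first exact: measurableT_comp (@measurable_inv R) mf.
exists c^-1 => x Sx; rewrite normfV lef_pV2 ?posrE ?cf //.
exact: lt_le_trans c0 (cf _ Sx).
Qed.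

Lemma cmbounded_cst c : cmbounded S (fun=> c).
Proof. by split; exact: mbounded_cst. Qed.

Lemma cmbounded_real f : mbounded S f -> cmbounded S (fun x => (f x)%:C).
Proof. by split => //; exact: mbounded_cst. Qed.

Lemma cmboundedD (f g : R -> R[i]) :
  cmbounded S f -> cmbounded S g -> cmbounded S (f \+ g).
Proof.
by move=> [f1 f2] [g1 g2]; split => /=; under eq_fun do rewrite raddfD;
  exact: mboundedD.
Qed.

Lemma cmboundedN (f : R -> R[i]) : cmbounded S f -> cmbounded S (\- f).
Proof.
by move=> [f1 f2]; split => /=; under eq_fun do rewrite raddfN; exact: mboundedN.
Qed.

Lemma cmboundedB (f g : R -> R[i]) :
  cmbounded S f -> cmbounded S g -> cmbounded S (f \- g).
Proof. by move=> cf cg; apply: cmboundedD cf (cmboundedN cg). Qed.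

Lemma cmboundedM (f g : R -> R[i]) :
  cmbounded S f -> cmbounded S g -> cmbounded S (f \* g).
Proof.
move=> [f1 f2] [g1 g2]; split => /=.
  by under eq_fun do rewrite ReMc; exact: mboundedD (mboundedM _ _) (mboundedN (mboundedM _ _)).
by under eq_fun do rewrite ImMc; exact: mboundedD (mboundedM _ _) (mboundedM _ _).
Qed.

Lemma mbounded_inv_sqr_cmod (f : R -> R[i]) c : 0 < c ->
  measurable_fun setT (fun x => Re (f x)) -> measurable_fun setT (fun x => Im (f x)) ->
  (forall x, S x -> c <= cmod (f x)) -> mbounded S (fun x => (cmod (f x) ^+ 2)^-1).
Proof.
move=> c0 m1 m2 cf; under eq_fun do rewrite sqr_cmod.
apply: (mboundedV (c := c ^+ 2)); first exact: exprn_gt0.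
  by apply: measurable_funD; exact: measurable_funX.
move=> x Sx; rewrite -sqr_cmod ger0_norm ?sqr_ge0 //.
by rewrite lerXn2r ?nnegrE ?cmod_ge0 ?(ltW c0) ?cf.
Qed.

Lemma cmboundedV (f : R -> R[i]) c : 0 < c ->
  measurable_fun setT (fun x => Re (f x)) -> measurable_fun setT (fun x => Im (f x)) ->
  (forall x, S x -> c <= cmod (f x)) -> cmbounded S (fun x => (f x)^-1).
Proof.
move=> c0 m1 m2 cf; have [mV _] := mbounded_inv_sqr_cmod c0 m1 m2 cf.
have bV x : S x -> cmod (f x)^-1 <= c^-1.
  move=> Sx; rewrite cmodV lef_pV2 ?posrE ?cf //; exact: lt_le_trans c0 (cf _ Sx).
split; split.
- by under eq_fun do rewrite ReVc; exact: measurable_funM.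
- by exists c^-1 => x Sx; apply: le_trans (normRe_le_cmod _) (bV _ Sx).
- by under eq_fun do rewrite ImVc; apply: measurable_funM => //; exact: measurable_funN.
- by exists c^-1 => x Sx; apply: le_trans (normIm_le_cmod _) (bV _ Sx).
Qed.

End BoundedMeasurable.

Lemma probability_Rintegral_cst (R : realType) (P : probability R R) c :
  Rintegral P setT (fun=> c) = c.
Proof.
by rewrite Rintegral_cst // (congr1 fine (probability_setT P)) mulr1.
Qed.

Section IntegralsOfBounded.
Variables (R : realType) (P : probability R R) (S : set R).
Hypotheses (mS : measurable S) (PS : P (~` S) = 0%E).
Implicit Types (f g : R -> R) (F G : R -> R[i]).

Lemma mbounded_integrableS f : mbounded S f -> P.-integrable S (EFin \o f).
Proof.
move=> [mf [K fK]]; apply: measurable_bounded_integrable => //.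
- by rewrite (le_lt_trans (probability_le1 _ _)) ?ltry.
- exact: measurable_funS mf.
- exact: bounded_of_normr_le fK.
Qed.

Lemma mbounded_integrable f : mbounded S f -> P.-integrable setT (EFin \o f).
Proof.
move=> bf; apply/(@negligible_integrable _ _ _ P setT (~` S)) => //.
- exact: measurableC.
- by apply/measurable_EFinP; case: bf.
- by rewrite setTD setCK; exact: mbounded_integrableS.
Qed.

Lemma RintegralT_restrict f : mbounded S f -> Rintegral P setT f = Rintegral P S f.
Proof.
move=> bf; rewrite /Rintegral (@negligible_integral _ _ _ P setT (~` S)) //.
- by rewrite setTD setCK.
- exact: measurableC.
- exact: mbounded_integrable.
Qed.

Lemma le_Rintegral_bounded f g : mbounded S f -> mbounded S g ->
  (forall x, S x -> f x <= g x) -> Rintegral P setT f <= Rintegral P setT g.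
Proof.
move=> bf bg fg; rewrite !RintegralT_restrict //.
by apply: le_Rintegral => //; exact: mbounded_integrableS.
Qed.

Lemma Rintegral_lin a b f g : mbounded S f -> mbounded S g ->
  Rintegral P setT (fun x => a * f x + b * g x) =
  a * Rintegral P setT f + b * Rintegral P setT g.
Proof.
move=> bf bg; have bZ c h : mbounded S h -> mbounded S (fun x => c * h x).
  by move=> bh; exact: mboundedM (mbounded_cst _ c) bh.
rewrite RintegralD //; try exact/mbounded_integrable/bZ.
by rewrite !RintegralZl //; exact: mbounded_integrable.
Qed.

Lemma cintegralZ c F : cmbounded S F ->
  cintegral P (fun x => c * F x) = c * cintegral P F.
Proof.
move=> [F1 F2]; rewrite [RHS]complex_eta ReMc ImMc /cintegral /=.
congr (_ +i* _); last first.
  by rewrite -(Rintegral_lin _ _ F2 F1); apply: eq_Rintegral => x _; rewrite ImMc.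
rewrite -mulNr -(Rintegral_lin _ _ F1 F2).
by apply: eq_Rintegral => x _; rewrite ReMc mulNr.
Qed.

Lemma RintegralD_bounded f g : mbounded S f -> mbounded S g ->
  Rintegral P setT (f \+ g) = Rintegral P setT f + Rintegral P setT g.
Proof. by move=> bf bg; rewrite RintegralD //; exact: mbounded_integrable. Qed.

Lemma cintegralD F G : cmbounded S F -> cmbounded S G ->
  cintegral P (F \+ G) = cintegral P F + cintegral P G.
Proof.
move=> [F1 F2] [G1 G2]; rewrite /cintegral /=; congr (_ +i* _).
  by rewrite -(RintegralD_bounded F1 G1); apply: eq_Rintegral => x _; rewrite raddfD.
by rewrite -(RintegralD_bounded F2 G2); apply: eq_Rintegral => x _; rewrite raddfD.
Qed.

Lemma cintegralN F : cmbounded S F -> cintegral P (\- F) = - cintegral P F.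
Proof.
move=> bF; rewrite -mulN1r -cintegralZ //.
by congr cintegral; apply/funext => x; rewrite mulN1r.
Qed.

Lemma cintegralB F G : cmbounded S F -> cmbounded S G ->
  cintegral P (F \- G) = cintegral P F - cintegral P G.
Proof. by move=> bF bG; rewrite cintegralD ?cintegralN //; exact: cmboundedN. Qed.

Lemma cintegralJ F : cmbounded S F ->
  cintegral P (fun x => (F x)^*) = (cintegral P F)^*.
Proof.
move=> [F1 F2]; rewrite /cintegral /=; congr (_ +i* _).
  by apply: eq_Rintegral => x _; rewrite ReJc.
transitivity (Rintegral P setT (fun x => -1 * Im (F x))).
  by apply: eq_Rintegral => x _; rewrite ImJc mulN1r.
by rewrite RintegralZl ?mulN1r //; exact: mbounded_integrable.
Qed.

Lemma ler_cmod_cintegral F g : cmbounded S F -> mbounded S g ->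
  (forall x, S x -> cmod (F x) <= g x) -> cmod (cintegral P F) <= Rintegral P setT g.
Proof.
move=> bF bg Fg; set I := cintegral P F.
have [->|I0] := eqVneq I 0.
  rewrite cmod_real normr0 -(probability_Rintegral_cst P 0).
  apply: le_Rintegral_bounded => // [|x Sx]; first exact: mbounded_cst.
  exact: le_trans (cmod_ge0 _) (Fg _ Sx).
(* Rotating I onto the positive real axis by the unit u turns |I| into the
   real part of an integral. *)
set u := ((cmod I)^-1)%:C * I^*.
have uI : u * I = (cmod I)%:C.
  rewrite /u -mulrA [_^* * _]mulrC -sqr_normc normc_cmod -rmorphXn -rmorphM /=.
  by rewrite expr2 mulrA mulVf ?mul1r // cmod_eq0.
have cu : cmod u = 1.
  by rewrite cmodM cmod_real cmodJ ger0_norm ?invr_ge0 ?cmod_ge0 // mulVf // cmod_eq0.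
have -> : cmod I = Re (cintegral P (fun x => u * F x)) by rewrite cintegralZ // uI.
rewrite /cintegral /=; apply: le_Rintegral_bounded => //.
  by case: (cmboundedM (cmbounded_cst S u) bF).
move=> x Sx; apply: le_trans (ler_norm _) _; apply: le_trans (normRe_le_cmod _) _.
by rewrite cmodM cu mul1r Fg.
Qed.

End IntegralsOfBounded.

(** * Stieltjes transforms *)

Definition stieltjes (R : realType) (rho : probability R R) (z : R[i]) : R[i] :=
  cintegral rho (fun x => (x%:C - z)^-1).

Lemma Im_inv_subC (R : realType) (x : R) (z : R[i]) :
  Im (x%:C - z)^-1 = Im z / cmod (x%:C - z) ^+ 2.
Proof. by rewrite ImVc raddfB /= sub0r opprK. Qed.

Section StieltjesOn.
Variables (R : realType) (rho : probability R R) (S : set R).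
Hypotheses (mS : measurable S) (rhoS : rho (~` S) = 0%E).

Lemma cmbounded_inv_subC (w : R[i]) (d : R) : 0 < d ->
  (forall x, S x -> d <= cmod (x%:C - w)) -> cmbounded S (fun x => (x%:C - w)^-1).
Proof.
move=> d0 dw; apply: (cmboundedV d0) => //.
- under eq_fun do rewrite raddfB.
  by apply: measurable_funB => //; exact: measurable_id.
- by under eq_fun do rewrite raddfB /=; exact: measurable_funB.
Qed.

Lemma Im_stieltjes_le (z : R[i]) (d : R) : 0 < d -> 0 <= Im z ->
  (forall x, S x -> d <= cmod (x%:C - z)) -> Im (stieltjes rho z) <= Im z / d ^+ 2.
Proof.
move=> d0 z0 dz; rewrite -[leRHS](probability_Rintegral_cst rho) /stieltjes /cintegral /=.
apply: (le_Rintegral_bounded mS rhoS _ (mbounded_cst _ _)) => [|x Sx].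
  by case: (cmbounded_inv_subC d0 dz).
rewrite Im_inv_subC ler_wpM2l // lef_pV2 ?posrE ?exprn_gt0 //.
- by rewrite lerXn2r ?nnegrE ?(ltW d0) ?cmod_ge0 ?dz.
- exact: lt_le_trans d0 (dz _ Sx).
Qed.

Lemma stieltjes_lipschitz (z w : R[i]) (d : R) : 0 < d ->
  (forall x, S x -> d <= cmod (x%:C - z)) -> (forall x, S x -> d <= cmod (x%:C - w)) ->
  cmod (stieltjes rho z - stieltjes rho w) <= cmod (z - w) / d ^+ 2.
Proof.
move=> d0 dz dw; have bz := cmbounded_inv_subC d0 dz.
have bw := cmbounded_inv_subC d0 dw.
rewrite /stieltjes -(cintegralB mS rhoS bz bw) -[leRHS](probability_Rintegral_cst rho).
apply: (ler_cmod_cintegral mS rhoS (cmboundedB bz bw) (mbounded_cst _ _)) => x Sx.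
have [dzx dwx] := (dz _ Sx, dw _ Sx).
have zx : x%:C - z != 0 by rewrite -cmod_gt0 (lt_le_trans d0).
have wx : x%:C - w != 0 by rewrite -cmod_gt0 (lt_le_trans d0).
rewrite /= (_ : _ - _ = (z - w) * ((x%:C - z)^-1 * (x%:C - w)^-1)); last first.
  by field; apply/andP.
rewrite !cmodM !cmodV ler_wpM2l ?cmod_ge0 // expr2 invfM.
by apply: ler_pM; rewrite ?invr_ge0 ?cmod_ge0 // lef_pV2 ?posrE //; exact: lt_le_trans d0 _.
Qed.

End StieltjesOn.

Section StieltjesTransform.
Variables (R : realType) (rho : probability R R).

Let rhoT : rho (~` setT) = 0%E. Proof. by rewrite setCT measure0. Qed.

Lemma stieltjesJ (z : R[i]) : Im z != 0 -> stieltjes rho z = (stieltjes rho z^*)^*.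
Proof.
move=> z0; have d0 : 0 < `|Im z| by rewrite normr_gt0.
have dz x : setT x -> `|Im z| <= cmod (x%:C - z^*).
  by move=> _; apply: le_trans (normIm_le_cmod _); rewrite raddfB /= ImJc sub0r !normrN.
rewrite /stieltjes -(cintegralJ measurableT rhoT (cmbounded_inv_subC d0 dz)).
by congr cintegral; apply/funext => x; rewrite conjc_inv rmorphB /= conjcK oppr0.
Qed.

Lemma Im_stieltjes_ge_ball (c e : R) : 0 < e ->
  fine (rho (ball c e)) / (2 * e) <= Im (stieltjes rho (c +i* e)).
Proof.
move=> e0; set w := c +i* e.
have dw x : setT x -> e <= cmod (x%:C - w).
  by move=> _; apply: le_trans (normIm_le_cmod _); rewrite raddfB /= sub0r normrN gtr0_norm.
have mB : measurable (ball c e) by exact: measurable_ball.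
have b1 : mbounded setT (\1_(ball c e) : R -> R).
  split; first exact/measurable_indicP.
  by exists 1 => x _; rewrite /indic; case: (_ \in _); rewrite ?normr1 ?normr0.
have -> : fine (rho (ball c e)) / (2 * e) =
    Rintegral rho setT (fun x => (2 * e)^-1 * \1_(ball c e) x).
  rewrite RintegralZl //; last exact: (mbounded_integrable measurableT rhoT).
  by rewrite mulrC /Rintegral integral_indic // setIT.
apply: (le_Rintegral_bounded measurableT rhoT (mboundedM (mbounded_cst _ _) b1)) => [|x _].
  by case: (cmbounded_inv_subC e0 dw).
rewrite Im_inv_subC /indic /=.
case: (boolP (x \in (ball c e : set R))) => [/set_mem|_]; last first.
  by rewrite mulr0 divr_ge0 ?exprn_ge0 ?cmod_ge0 // ltW.
rewrite -ball_normE /= mulr1 => cx.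
have xw : cmod (x%:C - w) ^+ 2 <= 2 * e ^+ 2.
  rewrite sqr_cmod !raddfB /= sub0r sqrrN.
  by move: cx; rewrite ltr_norml => /andP[? ?]; nra.
have xw0 : 0 < cmod (x%:C - w) ^+ 2 by apply/exprn_gt0/(lt_le_trans e0)/dw.
have -> : (2 * e)^-1 = e / (2 * e ^+ 2) by field; rewrite gt_eqF.
rewrite ler_wpM2l ?(ltW e0) // lef_pV2 ?posrE //.
by rewrite mulr_gt0 ?exprn_gt0.
Qed.

End StieltjesTransform.

(** * The self-consistent equation *)

Definition sce_denom (R : realType) (th : R) (z m : R[i]) (x : R) : R[i] :=
  (th * x)%:C - z - m.

Lemma Im_sce_denom (R : realType) (th : R) (z m : R[i]) x :
  Im (sce_denom th z m x) = - (Im z + Im m).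
Proof. by rewrite !raddfB /= sub0r opprD. Qed.

Section SelfConsistentEquation.
Variables (R : realType) (nu : probability R R) (M : R).
Hypotheses (M0 : 0 <= M) (nuM : nu (~` `[- M, M]) = 0%E).
Let S : set R := `[- M, M].
Let mS : measurable S. Proof. exact: measurable_itv. Qed.

Definition sce_weight (th : R) (z m : R[i]) : R :=
  Rintegral nu setT (fun x => (cmod (sce_denom th z m x) ^+ 2)^-1).

Lemma mbounded_scale a : mbounded S (fun x => a * x).
Proof.
split; first exact: mulrl_measurable.
exists (`|a| * M) => x; rewrite /S /= in_itv /= => xM.
by rewrite normrM ler_wpM2l // ler_norml.
Qed.

Section OneSolution.
Variables (th : R) (z m : R[i]).
Hypotheses (z0 : 0 < Im z) (m0 : 0 < Im m).
Hypothesis m_fix : m = cintegral nu (fun x => (sce_denom th z m x)^-1).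

Lemma sce_denom_ge x : Im z <= cmod (sce_denom th z m x).
Proof.
apply: le_trans (normIm_le_cmod _).
by rewrite Im_sce_denom normrN ger0_norm ?lerDl ?addr_ge0 ?ltW.
Qed.

Let measurable_sce_denom :
  measurable_fun setT (fun x => Re (sce_denom th z m x)) /\
  measurable_fun setT (fun x => Im (sce_denom th z m x)).
Proof.
split; rewrite /sce_denom; under eq_fun do rewrite !raddfB /=.
  by do 2 apply: measurable_funB => //; exact: mulrl_measurable.
exact: measurable_cst.
Qed.

Lemma cmbounded_sce_inv : cmbounded S (fun x => (sce_denom th z m x)^-1).
Proof.
by apply: (cmboundedV z0); try apply measurable_sce_denom; move=> x _; exact: sce_denom_ge.
Qed.

Lemma mbounded_sce_inv_sqr : mbounded S (fun x => (cmod (sce_denom th z m x) ^+ 2)^-1).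
Proof.
apply: (mbounded_inv_sqr_cmod z0); try apply measurable_sce_denom.
by move=> x _; exact: sce_denom_ge.
Qed.

Lemma sce_weight_ge0 : 0 <= sce_weight th z m.
Proof. by apply: Rintegral_ge0 => x _; rewrite invr_ge0 sqr_ge0. Qed.

Lemma Im_sce_fixpoint : Im m = (Im z + Im m) * sce_weight th z m.
Proof.
rewrite [in LHS]m_fix /cintegral /= -RintegralZl //; last first.
  exact: (mbounded_integrable mS nuM mbounded_sce_inv_sqr).
by apply: eq_Rintegral => x _; rewrite ImVc Im_sce_denom opprK.
Qed.

Lemma sce_weight_le1 : sce_weight th z m <= 1.
Proof.
have := Im_sce_fixpoint; have := sce_weight_ge0.
by move: (sce_weight _ _ _) (Im z) (Im m) z0 m0 => a v q *; nra.
Qed.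

Lemma sce_weight_le K : 0 <= K -> Im m <= Im z * K -> sce_weight th z m <= K / (1 + K).
Proof.
have := Im_sce_fixpoint; have := sce_weight_le1.
move: (sce_weight _ _ _) (Im z) (Im m) z0 => a v q *.
by rewrite ler_pdivlMr; [nra | lra].
Qed.

End OneSolution.

Section TwoSolutions.
Variables (th1 th2 : R) (z m1 m2 : R[i]).
Hypotheses (z0 : 0 < Im z) (m10 : 0 < Im m1) (m20 : 0 < Im m2).
Hypotheses (m1_fix : m1 = cintegral nu (fun x => (sce_denom th1 z m1 x)^-1))
  (m2_fix : m2 = cintegral nu (fun x => (sce_denom th2 z m2 x)^-1)).

Let W x := (sce_denom th1 z m1 x)^-1 * (sce_denom th2 z m2 x)^-1.
Let bW : cmbounded S W.
Proof. exact: cmboundedM (cmbounded_sce_inv _ z0 m10) (cmbounded_sce_inv _ z0 m20). Qed.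

Lemma sce_difference :
  m1 - m2 = cintegral nu (fun x => ((th2 - th1) * x)%:C * W x) + (m1 - m2) * cintegral nu W.
Proof.
have bth : cmbounded S (fun x => ((th2 - th1) * x)%:C).
  exact/cmbounded_real/mbounded_scale.
rewrite {1}m1_fix {1}m2_fix -(cintegralZ mS nuM _ bW).
rewrite -(cintegralD mS nuM (cmboundedM bth bW) (cmboundedM (cmbounded_cst _ _) bW)).
rewrite -(cintegralB mS nuM (cmbounded_sce_inv _ z0 m10) (cmbounded_sce_inv _ z0 m20)).
congr cintegral; apply/funext => x /=.
have n1 : sce_denom th1 z m1 x != 0 by rewrite -cmod_gt0 (lt_le_trans z0) ?sce_denom_ge.
have n2 : sce_denom th2 z m2 x != 0 by rewrite -cmod_gt0 (lt_le_trans z0) ?sce_denom_ge.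
move: n1 n2; rewrite /W /sce_denom !rmorphM !rmorphB /= => n1 n2.
by field; apply/andP.
Qed.

Lemma cmod_cintegral_mulW (g : R -> R[i]) C : 0 <= C -> cmbounded S g ->
  (forall x, S x -> cmod (g x) <= C) ->
  cmod (cintegral nu (g \* W)) <= C * ((sce_weight th1 z m1 + sce_weight th2 z m2) / 2).
Proof.
move=> C0 bg gC.
have r1 := mbounded_sce_inv_sqr th1 z0 m10; have r2 := mbounded_sce_inv_sqr th2 z0 m20.
have -> : C * ((sce_weight th1 z m1 + sce_weight th2 z m2) / 2) = Rintegral nu setT
    (fun x => C / 2 * (cmod (sce_denom th1 z m1 x) ^+ 2)^-1 +
              C / 2 * (cmod (sce_denom th2 z m2 x) ^+ 2)^-1).
  by rewrite (Rintegral_lin mS nuM _ _ r1 r2) /sce_weight; lra.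
apply: (ler_cmod_cintegral mS nuM (cmboundedM bg bW)).
  by apply: mboundedD; apply: mboundedM => //; exact: mbounded_cst.
move=> x Sx; rewrite /= /W !cmodM !cmodV -!exprVn.
set p := (cmod _)^-1; set q := (cmod _)^-1.
have pq : 0 <= p * q by rewrite mulr_ge0 ?invr_ge0 ?cmod_ge0.
apply: le_trans (ler_wpM2r pq (gC _ Sx)) _.
by apply: le_trans (ler_wpM2l C0 (leif_mean_square p q).1) _; lra.
Qed.

Lemma sce_lipschitz K : 0 <= K -> Im m1 <= Im z * K ->
  cmod (m1 - m2) <= 2 * M * (1 + K) * `|th1 - th2|.
Proof.
move=> K0 m1K; set w := (sce_weight th1 z m1 + sce_weight th2 z m2) / 2.
(* |m1 - m2| <= |th1 - th2| M w + |m1 - m2| w, and the spectral bound on Im m1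
   keeps w uniformly below 1. *)
have w1 : 1 <= 2 * (1 + K) * (1 - w).
  have := sce_weight_le z0 m10 m1_fix K0 m1K; have := sce_weight_le1 z0 m20 m2_fix.
  rewrite /w; move: (sce_weight _ _ _) (sce_weight _ _ _) => a1 a2 a21.
  by rewrite ler_pdivlMr; [nra | lra].
have wW : cmod (cintegral nu W) <= w.
  rewrite -[leRHS]mul1r (_ : W = (fun=> 1) \* W); last by apply/funext => x; rewrite /= mul1r.
  apply: cmod_cintegral_mulW => //.
    exact: cmbounded_cst.
  by move=> x _; rewrite cmod_real normr1.
have wE : cmod (cintegral nu (fun x => ((th2 - th1) * x)%:C * W x)) <= `|th1 - th2| * M * w.
  apply: cmod_cintegral_mulW; first by rewrite mulr_ge0.
    exact/cmbounded_real/mbounded_scale.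
  move=> x; rewrite /S /= in_itv /= => xM.
  by rewrite cmod_real normrM distrC ler_wpM2l // ler_norml.
have := ler_cmodD (cintegral nu (fun x => ((th2 - th1) * x)%:C * W x))
  ((m1 - m2) * cintegral nu W).
rewrite -sce_difference cmodM.
have := cmod_ge0 (m1 - m2); have := normr_ge0 (th1 - th2).
move: (cmod (m1 - m2)) (cmod (cintegral nu W)) (cmod (cintegral nu _)) w wW wE w1.
move: `|th1 - th2| => d D c e w cw ew w1 d0 D0 De.
have w1' : w <= 1 by nra.
have dM0 : 0 <= d * M by exact: mulr_ge0.
have DM : D * (1 - w) <= d * M by nra.
nra.
Qed.

End TwoSolutions.
End SelfConsistentEquation.

(* [ball c r] is covered by the n balls of radius s = 2r/n centred at
   c - r + k s, k < n. *)
Lemma measure_ball_le_cover (R : realType) (mu : {measure set R -> \bar R})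
    (c r B : R) (n : nat) : 0 < r -> (0 < n)%N ->
  (forall c', `|c' - c| <= r -> (mu (ball c' (2 * r / n%:R)) <= B%:E)%E) ->
  (mu (ball c r) <= (n%:R * B)%:E)%E.
Proof.
move=> r0 n0 hB; set s := 2 * r / n%:R.
have s0 : 0 < s by rewrite divr_gt0 ?ltr0n //; lra.
have ns : n%:R * s = 2 * r by rewrite /s mulrC divfK // pnatr_eq0 -lt0n.
set F := fun k : nat => ball (c - r + k%:R * s) s.
apply: le_trans (@content_subadditive _ _ _ mu (ball c r) F n _ _ _) _.
- by move=> k _; exact: measurable_ball.
- exact: measurable_ball.
- move=> y; rewrite -ball_normE /= => cy; rewrite -bigcup_mkord.
  have y0 : 0 <= (y - c + r) / s.
    by rewrite divr_ge0 ?(ltW s0) //; move: cy; rewrite ltr_norml; lra.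
  have /andP[j1 j2] := truncn_itv y0; set j := Num.truncn _ in j1 j2.
  rewrite ler_pdivlMr // in j1; rewrite ltr_pdivrMr // mulrSr in j2.
  exists j; last by rewrite /F -ball_normE /= ler0_norm ?lter_norml; lra.
  rewrite /= -(ltr_nat R) -(ltr_pM2r s0) ns; apply: le_lt_trans j1 _.
  by move: cy; rewrite ltr_norml; lra.
- rewrite (_ : (n%:R * B)%:E = \sum_(k < n) B%:E)%E; last first.
    by rewrite sumEFin sumr_const card_ord mulr_natl.
  apply: lee_sum => k _; apply: hB.
  have hk : (k%:R : R) * s <= 2 * r by rewrite -ns ler_wpM2r ?(ltW s0) // ler_nat ltnW.
  have hk0 : 0 <= (k%:R : R) * s by rewrite mulr_ge0 ?(ltW s0).
  rewrite ler_norml; lra.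
Qed.

(** * Stability of the solutions in the parameter *)

Lemma itv_gap (R : realType) (a b u : R) :
  ~ (a <= u <= b) -> exists2 d, 0 < d & forall x, a <= x <= b -> d <= `|x - u|.
Proof.
move=> /negP; rewrite negb_and -!ltNge => /orP[ua|bu].
  exists (a - u) => [|x /andP[ax _]]; first by rewrite subr_gt0.
  by apply: le_trans (ler_norm _); rewrite lerD2r.
exists (u - b) => [|x /andP[_ xb]]; first by rewrite subr_gt0.
by rewrite distrC; apply: le_trans (ler_norm _); rewrite lerD2l lerN2.
Qed.

Lemma le0_of_vanishing_bound (R : realType) (p a b : R) (e : nat -> R) :
  e @ \oo --> 0 ->
  (forall n N, (0 < n)%N -> p <= a / n%:R + b * `|e N|) -> p <= 0.
Proof.
move=> e0 pb; rewrite leNgt; apply/negP => p0.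
set n := (Num.truncn (2 * `|a| / p)).+1.
have an : a / n%:R < p / 2.
  have := truncnS_gt (2 * `|a| / p); rewrite -/n ltr_pdivrMr // => h.
  by rewrite ltr_pdivrMr ?ltr0n //; have := ler_norm a; lra.
set eps := p / (2 * (`|b| + 1)).
have eps0 : 0 < eps by rewrite divr_gt0 // mulr_gt0 // ltr_wpDl.
have [N _ /(_ N (leqnn N)) /= eN] := cvgr0_norm_lt _ e0 _ eps0.
have be : b * `|e N| < p / 2.
  apply: le_lt_trans (ler_norm _) _; rewrite normrM normr_id.
  apply: le_lt_trans (ler_wpM2l (normr_ge0 b) (ltW eN)) _.
  rewrite /eps mulrA ltr_pdivrMr; last by rewrite mulr_gt0 // ltr_wpDl.
  by have := normr_ge0 b; nra.
by have := pb n N isT; lra.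
Qed.

Definition gap_const (R : realType) (M d : R) := 2 * M * (1 + (d ^+ 2)^-1).

Section Stability.
Variables (R : realType) (nu : probability R R) (M : R).
Hypotheses (M0 : 0 <= M) (nuM : nu (~` `[- M, M]) = 0%E).
Variables (rho : R -> probability R R) (Lm Lp : R -> R) (mfc : R -> R[i] -> R[i]).
Variable Theta : set R.
Hypothesis mfcP : forall th, Theta th ->
  [/\ Lm th <= Lp th,
      msupport (rho th) `<=` `[Lm th, Lp th],
      msupport (rho th) (Lm th) /\ msupport (rho th) (Lp th),
      (forall z : R[i], ~ (Im z = 0 /\ Lm th <= Re z <= Lp th) ->
         mfc th z = cintegral (rho th) (fun x => (x%:C - z)^-1)) &
      (forall z : R[i], 0 < Im z ->
         0 < Im (mfc th z) /\
         mfc th z = cintegral nu (fun x => ((th * x)%:C - z - mfc th z)^-1))].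

Definition spectral_gap th (w : R[i]) (d : R) :=
  forall x, Lm th <= x <= Lp th -> d <= cmod (x%:C - w).

Lemma spectral_gap_itv th (w : R[i]) (d : R) : spectral_gap th w d ->
  forall x, `[Lm th, Lp th]%classic x -> d <= cmod (x%:C - w).
Proof. by move=> g x; rewrite /= in_itv; exact: g. Qed.

Lemma rho_off_spectrum th : Theta th -> rho th (~` `[Lm th, Lp th]) = 0%E.
Proof. by case/mfcP => _ S _ _ _; exact: measure_off_itv. Qed.

Lemma mfc_stieltjes th (w : R[i]) :
  Theta th -> ~ (Im w = 0 /\ Lm th <= Re w <= Lp th) -> mfc th w = stieltjes (rho th) w.
Proof. by case/mfcP => _ _ _ + _; apply. Qed.

Lemma mfc_stieltjes_nonreal th (w : R[i]) : Theta th -> Im w != 0 ->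
  mfc th w = stieltjes (rho th) w.
Proof. by move=> Tth w0; apply: mfc_stieltjes => // -[/eqP]; rewrite (negPf w0). Qed.

Lemma Im_mfc_le th (w : R[i]) (d : R) : Theta th -> 0 < d -> 0 < Im w ->
  spectral_gap th w d -> Im (mfc th w) <= Im w / d ^+ 2.
Proof.
move=> Tth d0 w0 g; rewrite mfc_stieltjes_nonreal ?gt_eqF //.
apply: (Im_stieltjes_le (measurable_itv _) (rho_off_spectrum Tth) d0 (ltW w0)).
exact: spectral_gap_itv.
Qed.

Lemma mfc_lipschitz_upper th1 th2 (w : R[i]) (d : R) :
  Theta th1 -> Theta th2 -> 0 < d -> 0 < Im w -> spectral_gap th1 w d ->
  cmod (mfc th1 w - mfc th2 w) <= gap_const M d * `|th1 - th2|.
Proof.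
move=> T1 T2 d0 w0 g; have [_ _ _ _ /(_ w w0)[q1 e1]] := mfcP T1.
have [_ _ _ _ /(_ w w0)[q2 e2]] := mfcP T2.
apply: (sce_lipschitz M0 nuM w0 q1 q2 e1 e2); first by rewrite invr_ge0 exprn_ge0 ?ltW.
exact: Im_mfc_le.
Qed.

Lemma mfc_lipschitz_lower th1 th2 (w : R[i]) (d : R) :
  Theta th1 -> Theta th2 -> 0 < d -> Im w < 0 -> spectral_gap th1 w d ->
  cmod (mfc th1 w - mfc th2 w) <= gap_const M d * `|th1 - th2|.
Proof.
move=> T1 T2 d0 w0 g; have w0' : Im w != 0 by rewrite ltr0_neq0.
have wJ : Im w^* != 0 by rewrite ImJc oppr_eq0.
rewrite !mfc_stieltjes_nonreal // (stieltjesJ (rho th1) w0') (stieltjesJ (rho th2) w0').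
rewrite -rmorphB cmodJ -!mfc_stieltjes_nonreal //.
apply: mfc_lipschitz_upper => //; first by rewrite ImJc oppr_gt0.
by move=> x /g; rewrite -[in X in _ -> X]cmodJ rmorphB /= conjcK oppr0.
Qed.

Lemma mfc_lipschitz_real th1 th2 (z : R[i]) (d : R) :
  Theta th1 -> Theta th2 -> 0 < d -> Im z = 0 -> spectral_gap th1 z d ->
  ~ (Lm th2 <= Re z <= Lp th2) ->
  cmod (mfc th1 z - mfc th2 z) <= gap_const M d * `|th1 - th2|.
Proof.
move=> T1 T2 d0 z0 g1 z2.
have zE : z = (Re z)%:C by rewrite [LHS]complex_eta z0.
have [d2 d20 g2'] := itv_gap z2.
have g2 : spectral_gap th2 z d2 by move=> x /g2'; rewrite cmod_subC_real.
have z1 : ~ (Im z = 0 /\ Lm th1 <= Re z <= Lp th1).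
  by case=> _ /g1; rewrite cmod_subC_real // subrr normr0 leNgt d0.
rewrite (mfc_stieltjes T1 z1) (mfc_stieltjes T2 (fun h => z2 h.2)).
(* approach z from the upper half-plane *)
apply/ler_addgt0Pr => e e0; set K := (d ^+ 2)^-1 + (d2 ^+ 2)^-1.
have K0 : 0 <= K by rewrite addr_ge0 // invr_ge0 exprn_ge0 // ltW.
set eps := e / (K + 1); have eps0 : 0 < eps by rewrite divr_gt0 // ltr_wpDl.
set w := Re z +i* eps; have w0 : 0 < Im w by [].
have zw : cmod (z - w) = eps.
  by rewrite {1}zE /cmod /= subrr expr0n add0r sub0r sqrrN sqrtr_sqr gtr0_norm.
have gw (th dd : R) : spectral_gap th z dd -> spectral_gap th w dd.
  move=> g x /g /le_trans; apply; rewrite cmod_subC_real //.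
  exact: (dist_Re_le_cmod x w).
have L1 := stieltjes_lipschitz (measurable_itv _) (rho_off_spectrum T1) d0
  (spectral_gap_itv g1) (spectral_gap_itv (gw _ _ g1)).
have L2 := stieltjes_lipschitz (measurable_itv _) (rho_off_spectrum T2) d20
  (spectral_gap_itv (gw _ _ g2)) (spectral_gap_itv g2).
have U := mfc_lipschitz_upper T1 T2 d0 w0 (gw _ _ g1).
rewrite !mfc_stieltjes_nonreal ?gt_eqF // in U.
rewrite zw in L1; rewrite (cmod_distC w) zw in L2.
have eK : eps * K <= e.
  by rewrite /eps mulrAC ler_pdivrMr ?ltr_wpDl // ler_wpM2l ?(ltW e0) // lerDl.
set S1z := stieltjes _ z in L1 *; set S1w := stieltjes _ w in L1 U.
set S2w := stieltjes _ w in L2 U; set S2z := stieltjes _ z in L2 *.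
have -> : S1z - S2z = (S1z - S1w) + (S1w - S2w) + (S2w - S2z) by ring.
apply: le_trans (ler_cmodD _ _) _; apply: le_trans (lerD (ler_cmodD _ _) (lexx _)) _.
by rewrite /K mulrDr in eK; lra.
Qed.

Lemma rho_ball_le thN thi (c s d : R) : Theta thN -> Theta thi -> 0 < s -> 0 < d ->
  (forall x, Lm thN <= x <= Lp thN -> d <= `|x - c|) ->
  fine (rho thi (ball c s)) <= 2 * s * (s / d ^+ 2 + gap_const M d * `|thN - thi|).
Proof.
move=> TN Ti s0 d0 gc; set w := c +i* s; have w0 : 0 < Im w by [].
have gw : spectral_gap thN w d.
  by move=> x /gc /le_trans; apply; exact: (dist_Re_le_cmod x w).
have lb := Im_stieltjes_ge_ball (rho thi) c s0.
rewrite -/w -(mfc_stieltjes_nonreal Ti (lt0r_neq0 w0)) in lb.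
have ub := Im_mfc_le TN d0 w0 gw.
have U := mfc_lipschitz_upper TN Ti d0 w0 gw.
have I : Im (mfc thi w) <= Im (mfc thN w) + cmod (mfc thN w - mfc thi w).
  rewrite -lerBlDl -opprB -raddfB.
  by apply: le_trans (normIm_le_cmod _); rewrite -normrN ler_norm.
rewrite mulrC -ler_pdivrMr ?mulr_gt0 //.
by apply: le_trans lb _; apply: le_trans I _; exact: lerD.
Qed.

Lemma rho_ball_le_far thN thi (c r d : R) n : Theta thN -> Theta thi ->
  0 < r -> 0 < d -> (0 < n)%N ->
  (forall c', `|c' - c| <= r -> forall x, Lm thN <= x <= Lp thN -> d <= `|x - c'|) ->
  fine (rho thi (ball c r)) <=
    8 * r ^+ 2 / d ^+ 2 / n%:R + 4 * r * gap_const M d * `|thN - thi|.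
Proof.
move=> TN Ti r0 d0 n0 far; set s := 2 * r / n%:R.
have s0 : 0 < s by rewrite divr_gt0 ?ltr0n //; lra.
have ns : n%:R * s = 2 * r by rewrite /s mulrC divfK // pnatr_eq0 -lt0n.
have fin c' e : rho thi (ball c' e) \is a fin_num.
  by rewrite fin_num_measure //; exact: measurable_ball.
have cover : (rho thi (ball c r) <=
    (n%:R * (2 * s * (s / d ^+ 2 + gap_const M d * `|thN - thi|)))%:E)%E.
  apply: measure_ball_le_cover => // c' cc'.
  have := rho_ball_le TN Ti s0 d0 (far c' cc').
  by rewrite -lee_fin fineK // => h; exact: h.
have nR : n%:R != 0 :> R by rewrite pnatr_eq0 -lt0n.
have -> : 8 * r ^+ 2 / d ^+ 2 / n%:R + 4 * r * gap_const M d * `|thN - thi| =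
    n%:R * (2 * s * (s / d ^+ 2 + gap_const M d * `|thN - thi|)).
  by rewrite /s; field; rewrite nR; apply/andP; split => //; exact: lt0r_neq0.
by rewrite -lee_fin fineK.
Qed.

Lemma spectrum_endpoint_far thN thi (u delta : R) : Theta thN -> 0 < delta ->
  Lm thi <= u <= Lp thi -> (forall x, Lm thN <= x <= Lp thN -> delta <= `|x - u|) ->
  exists2 c, c = Lm thi \/ c = Lp thi &
    forall c', `|c' - c| <= delta / 4 ->
    forall x, Lm thN <= x <= Lp thN -> delta / 2 <= `|x - c'|.
Proof.
move=> TN d0 /andP[lu up] gu; have [lNp _ _ _ _] := mfcP TN.
have [uN|Nu] : u + delta <= Lm thN \/ Lp thN + delta <= u.
  have hl : delta <= `|Lm thN - u| by apply: gu; rewrite lexx lNp.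
  have hp : delta <= `|Lp thN - u| by apply: gu; rewrite lexx lNp.
  case: (ltrP u (Lm thN)) => [ul|lu'].
    by left; move: hl; rewrite gtr0_norm ?subr_gt0 //; lra.
  case: (ltrP (Lp thN) u) => [pu|up'].
    by right; move: hp; rewrite ltr0_norm ?subr_lt0 //; lra.
  by have := gu u; rewrite lu' up' subrr normr0 => /(_ isT); lra.
- exists (Lm thi) => [|c' /[!ler_norml] /andP[c1 c2] x /andP[x1 x2]]; first by left.
  by apply: le_trans (ler_norm _); lra.
- exists (Lp thi) => [|c' /[!ler_norml] /andP[c1 c2] x /andP[x1 x2]]; first by right.
  by rewrite distrC; apply: le_trans (ler_norm _); lra.
Qed.

Lemma not_mem_limit_spectrum (theta : nat -> R) thi (u delta : R) :
  Theta thi -> (forall N, Theta (theta N)) -> theta @ \oo --> thi -> 0 < delta ->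
  (forall N x, Lm (theta N) <= x <= Lp (theta N) -> delta <= `|x - u|) ->
  ~ (Lm thi <= u <= Lp thi).
Proof.
move=> Ti TN cv d0 gu uin; set r := delta / 4; set d := delta / 2.
have r0 : 0 < r by rewrite divr_gt0.
have d0' : 0 < d by rewrite divr_gt0.
have [_ _ [supp_l supp_p] _ _] := mfcP Ti.
have mass c : msupport (rho thi) c -> 0 < fine (rho thi (ball c r)).
  move=> /(_ r r0) pos; apply: fine_gt0; rewrite pos /= -ge0_fin_numE ?measure_ge0 //.
  by rewrite fin_num_measure //; exact: measurable_ball.
set p := Num.min (fine (rho thi (ball (Lm thi) r))) (fine (rho thi (ball (Lp thi) r))).
have p0 : 0 < p by rewrite lt_min !mass.
suff : p <= 0 by rewrite leNgt p0.
apply: (@le0_of_vanishing_bound _ _ (8 * r ^+ 2 / d ^+ 2) (4 * r * gap_const M d)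
  (fun N => theta N - thi)); first exact/subr_cvg0.
move=> n N n0; have [c cE far] := spectrum_endpoint_far (TN N) d0 uin (gu N).
apply: le_trans (rho_ball_le_far (TN N) Ti r0 d0' n0 far).
by case: cE => ->; rewrite ge_min lexx ?orbT.
Qed.

Lemma mfc_lipschitz th1 th2 (z : R[i]) (d : R) :
  Theta th1 -> Theta th2 -> 0 < d -> spectral_gap th1 z d ->
  (Im z = 0 -> ~ (Lm th2 <= Re z <= Lp th2)) ->
  cmod (mfc th1 z - mfc th2 z) <= gap_const M d * `|th1 - th2|.
Proof.
move=> T1 T2 d0 g z2; case: (ltrgtP (Im z) 0) => z0.
- exact: mfc_lipschitz_lower.
- exact: mfc_lipschitz_upper.
- exact: mfc_lipschitz_real (z2 z0).
Qed.

End Stability.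

Unset Implicit Arguments. Set Strict Implicit. Set Printing Implicit Defensive.

Theorem mainTheorem8 (R : realType)
  (nu : probability R R) (varpi : R)
  (rho : R -> probability R R) (Lm Lp : R -> R) (mfc : R -> R[i] -> R[i])
  (theta : nat -> R) (theta_inf : R) (D : set R[i]) :
  (* nu: centered, compactly supported, with the inverse-square condition *)
  compact (msupport nu) ->
  (\int[nu]_x (x%:E) = 0)%E ->
  0 < varpi ->
  (forall x, hull_interval (msupport nu) x ->
     ((1 + varpi)%:E <= \int[nu]_v inv_sq_ext x v)%E) ->
  (* for every vartheta in [0, 1 + varpi]: rho vartheta is a probability
     measure whose support has convex hull [Lm vartheta, Lp vartheta],
     mfc vartheta is its Stieltjes transform off [Lm, Lp], and on C^+ it has
     positive imaginary part and solves the self-consistent equation *)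
  (forall th, 0 <= th <= 1 + varpi ->
     [/\ Lm th <= Lp th,
         msupport (rho th) `<=` `[Lm th, Lp th],
         msupport (rho th) (Lm th) /\ msupport (rho th) (Lp th),
         (forall z : R[i], ~ (complex.Im z = 0 /\ Lm th <= complex.Re z <= Lp th) ->
            mfc th z = cintegral (rho th) (fun x => (x%:C - z)^-1)) &
         (forall z : R[i], 0 < complex.Im z ->
            0 < complex.Im (mfc th z) /\
            mfc th z = cintegral nu (fun x => ((th * x)%:C - z - mfc th z)^-1))]) ->
  (* the sequence vartheta_N *)
  (forall N, 0 <= theta N <= 1 + varpi) ->
  theta @ \oo --> theta_inf ->
  (* D compact (C identified with R^2) and uniformly away from the spectra *)
  compact [set p : R * R | D (p.1 +i* p.2)] ->
  (exists delta : R, 0 < delta /\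
     forall N z x, D z -> Lm (theta N) <= x <= Lp (theta N) ->
       delta <= cmod (z - x%:C)) ->
  exists C : R, 0 < C /\
    \forall N \near \oo, forall z, D z ->
      cmod (mfc (theta N) z - mfc theta_inf z) <= C * `|theta N - theta_inf|.
Proof.
move=> nu_compact _ _ _ mfcP theta_adm theta_cvg _ [delta [delta0 gapD]].
have [M M0 nuM] := measure_off_compact_msupport nu_compact.
have thinf_adm : 0 <= theta_inf <= 1 + varpi.
  have := closed_cvg _ (@interval_closed R (BLeft 0) (BRight (1 + varpi)) isT isT)
    _ _ theta_cvg.
  by rewrite /= in_itv; apply; apply: nearW => N; rewrite /= in_itv theta_adm.
exists (gap_const M delta + 1); split.
  by rewrite ltr_pwDr // !mulr_ge0 // addr_ge0 // invr_ge0 exprn_ge0 // ltW.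
apply: nearW => N z Dz.
suff : cmod (mfc (theta N) z - mfc theta_inf z) <= gap_const M delta * `|theta N - theta_inf|.
  by move/le_trans; apply; rewrite ler_wpM2r // lerDl.
apply: (mfc_lipschitz M0 nuM mfcP (theta_adm N) thinf_adm delta0).
  by move=> x /(gapD N z x Dz); rewrite cmod_distC.
move=> z0; apply: (not_mem_limit_spectrum M0 nuM mfcP thinf_adm theta_adm theta_cvg delta0).
by move=> N' x /(gapD N' z x Dz); rewrite cmod_distC cmod_subC_real.
Qed.
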